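(* Let $N\ge3$, $G\in\mathcal G_2(N)$, $\varepsilon=0$ and $s_0\in S_{nc}$. Then for every $\gamma\in(0,1)$, $\Gamma_N(G|s_0,\gamma,0)$ has a positional trigger strategies profile $\bar\sigma$.
   Context: Setting. $G=(V,E)$ is a finite, simple, connected, undirected graph; $N\ge 3$ is an integer; $\gamma\in(0,1)$ and $\varepsilon\in[0,\frac1{N-1}]$ are parameters. There are $N$ tokens: cops $C_1,\dots,C_{N-1}$ (tokens $1,\dots,N-1$) and the robber $R$ (token $N$). A state is $s=(x^1,\dots,x^N,n)$ where $x^i\in V$ is the position of token $i$ and $n\in\{1,\dots,N\}$ is the token that moves next; $S^n$ denotes the set of states with token $n$ to move. A state is a capture state if $x^i=x^N$ for some $i\le N-1$; $S_{nc}$ is the set of noncapture states. In each turn exactly one token, the one to move, moves to a vertex of its closed neighbourhood (it may stay put); the order of moves is $C_1,C_2,\dots,C_{N-1},R,C_1,\dots$. Starting from an initial state $s_0\in S_{nc}$ at time $0$, the capture time is the first time $t$ at which a capture state occurs (infinite if never); after capture the game is over. Auxiliary games. For $m\in\{1,\dots,N\}$, $\Gamma_N^m(G|s_0,\gamma,\varepsilon)$ is the two-player zero-sum game in which player $P_m$ controls token $m$ and player $P_{-m}$ controls all other tokens, with the following payoff to $P_m$ ($P_{-m}$ receives its negative): $0$ if no capture ever occurs; if capture occurs at time $t$: for $m=N$, $-\gamma^t$; for $m\le N-1$, $\frac{1-\varepsilon}{K}\gamma^t$ if exactly $K\in\{1,\dots,N-2\}$ cops, including $C_m$, are on the robber's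 vertex, $\frac{\varepsilon}{N-K-1}\gamma^t$ if exactly $K\in\{1,\dots,N-2\}$ cops, not including $C_m$, are on the robber's vertex, and $\frac{\gamma^t}{N-1}$ if all $N-1$ cops are on the robber's vertex. $\Gamma^N_N$ is the modified cops-and-robber (CR) game. A pure positional strategy for token $n$ maps each state in $S^n\cap S_{nc}$ to an allowed next vertex. Each $\Gamma^m_N$ has optimal pure positional strategies (optimal from every initial state). For $m,n\in\{1,\dots,N\}$, $\phi^n_m$ denotes the strategy of token $n$ in a chosen pair of optimal pure positional strategies of $\Gamma^m_N$ (so $\phi^m_m$ is $P_m$'s optimal strategy and $(\phi^n_m)_{n\ne m}$ is $P_{-m}$'s). $\widehat\Sigma^n$ is the set of pure positional strategies of token $n$ that are components of optimal strategy pairs of $\Gamma^N_N$ (CR-optimal strategies). Trigger strategies. Given a choice of $(\phi^n_m)_{n,m}$, the trigger strategies profile $\bar\sigma=(\bar\sigma^1,\dots,\bar\sigma^N)$ of the $N$-player SCAR game $\Gamma_N(G|s_0,\gamma,\varepsilon)$ (same board and moves; player $n$ controls token $n$) is: token $n$, at current state $s$, plays $\phi^n_n(s)$ as long as every other player $m$ has followed $\phi^m_m$, and plays $\phi^n_m(s)$ from the moment a player $m\neq n$ deviates from $\phi^m_m$. Different choices of the optimal strategies give different trigger strategies profiles. $\bar\sigma$ is called positional if for all $n,m\in\{1,\dots,N\}$ there is $\widehat\sigma^n\in\widehat\Sigma^n$ with $\phi^n_m(s)=\widehat\sigma^n(s)$ for every state $s\in S^n\cap S_{nc}$ reachable from $s_0$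 by a finite sequence of legal moves passing only through noncapture states; otherwise $\bar\sigma$ is nonpositional. State cop number. For $s\in S_{nc}$, $c(G|s)=c_N(G|s)$ is the minimum $k\in\{1,\dots,N-1\}$ for which there exist $k$ cops and strategies for them such that, starting from $s$, a capture (by any cop) occurs whatever the other $N-k$ tokens (including $R$) do; $c(G|s)=\infty$ if no such $k$ exists. $c(G)$ is the classical cop number of $G$. Graph classes. $\mathcal G(N)=\{G: c(G)>N-1\}$; $\mathcal G_2(N)=\{G\in\mathcal G(N): c(G|s)=\infty\text{ for all } s\in S^N\cap S_{nc}\}$. *)

From Stdlib Require Import Reals ClassicalEpsilon.
From mathcomp Require Import all_boot.

Set Implicit Arguments.
Unset Strict Implicit.
Unset Printing Implicit Defensive.

Definition simple_graph (V : finType) (e : rel V) : Prop :=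
  (forall x y, e x y = e y x) /\ (forall x, ~~ e x x).
Definition connected_graph (V : finType) (e : rel V) : Prop :=
  forall x y, connect e x y.
Definition cnbr (V : finType) (e : rel V) (x y : V) : bool := (x == y) || e x y.

(* The N-token game.  Tokens are 'I_N: tokens 0..N-2 are the cops
   C_1..C_{N-1}, token N-1 is the robber R.                            *)
Definition is_cop (N : nat) (i : 'I_N) : bool := i < N.-1.
Definition is_robber (N : nat) (i : 'I_N) : bool := nat_of_ord i == N.-1.

(* a state: positions of the N tokens and the token to move *)
Definition state (V : finType) (N : nat) := ({ffun 'I_N -> V} * 'I_N)%type.

Definition on_robber (V : finType) (N : nat) (s : state V N) (i : 'I_N) : bool :=
  [exists j, is_robber j && (s.1 i == s.1 j)].
Definition capture (V : finType) (N : nat) (s : state V N) : bool :=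
  [exists i, is_cop i && on_robber s i].

(* the token to move moves to v; the next token (cyclically) moves next:
   order C_1, ..., C_{N-1}, R, C_1, ... *)
Definition step (V : finType) (N : nat) (s : state V N) (v : V) : state V N :=
  ([ffun i => if i == s.2 then v else s.1 i], ordS s.2).

(* general (history-dependent) pure strategies of a token: the
   argument is the list of past states and the current state *)
Definition strat (V : finType) (N : nat) := seq (state V N) -> state V N -> V.
Definition pstrat (V : finType) (N : nat) := state V N -> V.
Definition lift (V : finType) (N : nat) (f : pstrat V N) : strat V N :=
  fun _ s => f s.

Definition legal (V : finType) (e : rel V) (N : nat) (n : 'I_N) (f : strat V N)
  : Prop :=
  forall h (s : state V N), s.2 = n -> ~~ capture s -> cnbr e (s.1 n) (f h s).
Definition plegal (V : finType) (e : rel V) (N : nat) (n : 'I_N) (f : pstrat V N)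
  : Prop := legal e n (lift f).

(* the play: (history, state at time t) *)
Fixpoint run (V : finType) (N : nat) (p : 'I_N -> strat V N) (s0 : state V N)
  (t : nat) : seq (state V N) * state V N :=
  match t with
  | 0 => ([::], s0)
  | t'.+1 => let hs := run p s0 t' in
             (rcons hs.1 hs.2, step hs.2 (p hs.2.2 hs.1 hs.2))
  end.
Definition st (V : finType) (N : nat) (p : 'I_N -> strat V N) (s0 : state V N)
  (t : nat) : state V N := (run p s0 t).2.

(* capture time: first time a capture state occurs (None = infinite) *)
Definition capt_time (V : finType) (N : nat) (p : 'I_N -> strat V N)
  (s0 : state V N) : option nat :=
  match excluded_middle_informative
          (exists t, (fun t => capture (st p s0 t)) t) with
  | left H => Some (ex_minn H)
  | right _ => None
  end.

(* Payoffs of the auxiliary game Gamma^m_N (to player P_m). *)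
Definition reward (V : finType) (N : nat) (eps : R) (m : 'I_N) (s : state V N)
  : R :=
  if is_robber m then Ropp R1 else
  let K := #|[set i | is_cop i && on_robber s i]| in
  if K == N.-1 then Rdiv R1 (INR N.-1)
  else if on_robber s m then Rdiv (Rminus R1 eps) (INR K)
  else Rdiv eps (INR (N - K - 1)).

Definition payoff (V : finType) (N : nat) (gamma eps : R) (m : 'I_N)
  (p : 'I_N -> strat V N) (s0 : state V N) : R :=
  match capt_time p s0 with
  | Some t => Rmult (reward eps m (st p s0 t)) (pow gamma t)
  | None => R0
  end.

Definition upd (V : finType) (N : nat) (p : 'I_N -> strat V N) (m : 'I_N)
  (f : strat V N) : 'I_N -> strat V N :=
  fun i => if i == m then f else p i.

(* phi : a profile of pure positional strategies for all tokens is an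
   optimal strategy pair of Gamma^m_N (phi m is P_m's strategy, the
   others P_{-m}'s), optimal from every initial (noncapture) state,
   against all (history-dependent) legal deviations. *)
Definition optimal_pair (V : finType) (e : rel V) (N : nat) (gamma eps : R)
  (m : 'I_N) (phi : 'I_N -> pstrat V N) : Prop :=
  (forall n, plegal e n (phi n)) /\
  forall s0 : state V N, ~~ capture s0 ->
    (forall f : strat V N, legal e m f ->
       Rle (payoff gamma eps m (upd (fun i => lift (phi i)) m f) s0)
           (payoff gamma eps m (fun i => lift (phi i)) s0)) /\
    (forall q : 'I_N -> strat V N, (forall n, legal e n (q n)) ->
       Rle (payoff gamma eps m (fun i => lift (phi i)) s0)
           (payoff gamma eps m (upd q m (lift (phi m))) s0)).

(* CR-optimal strategies: components of optimal pairs of Gamma^N_N *)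
Definition CR_optimal (V : finType) (e : rel V) (N : nat) (gamma eps : R)
  (n : 'I_N) (f : pstrat V N) : Prop :=
  exists (r : 'I_N) (phi : 'I_N -> pstrat V N),
    is_robber r /\ optimal_pair e gamma eps r phi /\ phi n = f.

Inductive reachable (V : finType) (e : rel V) (N : nat) (s0 : state V N)
  : state V N -> Prop :=
  | reach0 : reachable e s0 s0
  | reachS : forall s v, reachable e s0 s -> cnbr e (s.1 s.2) v ->
             ~~ capture s -> ~~ capture (step s v) ->
             reachable e s0 (step s v).

(* A choice of optimal strategies: phi m n = phi^n_m. *)
Definition trigger_choice (V : finType) (e : rel V) (N : nat) (gamma eps : R)
  (phi : 'I_N -> 'I_N -> pstrat V N) : Prop :=
  forall m, optimal_pair e gamma eps m (phi m).

Definition positional_trigger (V : finType) (e : rel V) (N : nat)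
  (gamma eps : R) (s0 : state V N) (phi : 'I_N -> 'I_N -> pstrat V N) : Prop :=
  forall n m : 'I_N, exists f : pstrat V N,
    CR_optimal e gamma eps n f /\
    forall s, reachable e s0 s -> s.2 = n -> ~~ capture s -> phi m n s = f s.

(* Classical cops and robber game with k cops: cops place themselves,
   the robber places himself, then cops (all simultaneously) and robber
   alternate; each move to a vertex of the closed neighbourhood.
   cstate = (cop positions, robber position, cops_to_move). *)
Definition cstate (V : finType) (k : nat) := ({ffun 'I_k -> V} * V * bool)%type.
Definition ccapture (V : finType) (k : nat) (s : cstate V k) : bool :=
  [exists i, s.1.1 i == s.1.2].

Fixpoint crun (V : finType) (k : nat)
  (cm : seq (cstate V k) -> cstate V k -> {ffun 'I_k -> V})
  (rm : seq (cstate V k) -> cstate V k -> V) (s0 : cstate V k) (t : nat)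
  : seq (cstate V k) * cstate V k :=
  match t with
  | 0 => ([::], s0)
  | t'.+1 => let hs := crun cm rm s0 t' in
             let s := hs.2 in
             (rcons hs.1 s,
              if s.2 then (cm hs.1 s, s.1.2, false)
              else (s.1.1, rm hs.1 s, true))
  end.

Definition cop_win (V : finType) (e : rel V) (k : nat) : Prop :=
  exists (c0 : {ffun 'I_k -> V})
         (cm : seq (cstate V k) -> cstate V k -> {ffun 'I_k -> V}),
    (forall h (s : cstate V k), s.2 -> forall i, cnbr e (s.1.1 i) (cm h s i)) /\
    forall (r0 : {ffun 'I_k -> V} -> V) (rm : seq (cstate V k) -> cstate V k -> V),
      (forall h (s : cstate V k), ~~ s.2 -> cnbr e s.1.2 (rm h s)) ->
      exists t, ccapture (crun cm rm (c0, r0 c0, true) t).2.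

Definition cop_number_gt (V : finType) (e : rel V) (m : nat) : Prop :=
  forall k, 0 < k <= m -> ~ cop_win e k.

Definition in_calG (V : finType) (e : rel V) (N : nat) : Prop :=
  cop_number_gt e N.-1.

Definition k_cops_capture (V : finType) (e : rel V) (N : nat) (k : nat)
  (s : state V N) : Prop :=
  exists (A : {set 'I_N}) (sig : 'I_N -> strat V N),
    (forall i, i \in A -> is_cop i) /\ #|A| = k /\
    (forall i, i \in A -> legal e i (sig i)) /\
    forall tau : 'I_N -> strat V N, (forall i, legal e i (tau i)) ->
      exists t, capture (st (fun i => if i \in A then sig i else tau i) s t).

Definition state_cop_number_inf (V : finType) (e : rel V) (N : nat)
  (s : state V N) : Prop :=
  ~ exists k, (1 <= k <= N.-1) /\ k_cops_capture e k s.

Definition in_calG2 (V : finType) (e : rel V) (N : nat) : Prop :=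
  in_calG e N /\
  forall s : state V N, is_robber s.2 -> ~~ capture s -> state_cop_number_inf e s.

From Pilot Require Import Defs.
From Stdlib Require Import Reals Classical ClassicalEpsilon Lra.
From mathcomp Require Import all_boot zify.

Set Implicit Arguments.
Unset Strict Implicit.
Unset Printing Implicit Defensive.

(* Every auxiliary game Gamma^m_N has the same optimal pair of positional
   strategies, so the trigger profile built from it is positional.  In this
   greedy profile a cop steps onto the robber when adjacent to him and stays
   put otherwise, and the robber moves to a vertex outside the closed
   neighbourhoods of all cops.  Such a vertex always exists: otherwise the
   N-1 greedy cops would capture within one round, contradicting c(G|s) = oo.
   So if no cop still to move in the current round is adjacent to the robber,
   nobody is ever caught and every payoff is 0; otherwise the first such cop
   captures alone at a time T nobody can advance, getting gamma^T against
   -gamma^T for the robber and, since eps = 0, nothing for the other cops.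
   In both cases no player gains by deviating, and no coalition of the others
   can push a player below these values. *)

Local Open Scope R_scope.

Lemma pow_le_decr (g : R) (t T : nat) : 0 <= g <= 1 -> (t <= T)%N -> g ^ T <= g ^ t.
Proof.
move=> g01 /subnKC <-; rewrite pow_add.
have : g ^ (T - t) <= 1 by rewrite -(pow1 (T - t)); apply: pow_incr.
have := pow_le g t (proj1 g01); have := pow_le g (T - t) (proj1 g01); nra.
Qed.

Section Payoff.

Variables (V : finType) (N : nat) (gamma : R).
Hypothesis gamma01 : 0 < gamma < 1.

Variant capt_time_spec (p : 'I_N -> strat V N) (s0 : state V N) : option nat -> Prop :=
  | CaptNever of (forall t, ~~ capture (st p s0 t)) : capt_time_spec p s0 None
  | CaptAt t of capture (st p s0 t) & (forall u, (u < t)%N -> ~~ capture (st p s0 u)) :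
      capt_time_spec p s0 (Some t).

Lemma capt_timeP (p : 'I_N -> strat V N) (s0 : state V N) :
  capt_time_spec p s0 (capt_time p s0).
Proof.
rewrite /capt_time; case: excluded_middle_informative => [ex | no_cap].
  case: ex_minnP => t cap_t min_t; apply: CaptAt => // u lt_ut.
  by apply/negP => /min_t; rewrite leqNgt lt_ut.
by apply: CaptNever => t; apply/negP => cap_t; apply: no_cap; exists t.
Qed.

Lemma payoff_capture_at eps (m : 'I_N) (p : 'I_N -> strat V N) s0 T : capture (st p s0 T) ->
  (forall u, (u < T)%N -> ~~ capture (st p s0 u)) ->
  payoff gamma eps m p s0 = reward eps m (st p s0 T) * gamma ^ T.
Proof.
move=> cap_T before_T; rewrite /payoff; case: capt_timeP => [never | t cap_t before_t].
  by case: (negP (never T) cap_T).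
suff -> : t = T by [].
apply/eqP; rewrite eqn_leq; apply/andP; split; rewrite leqNgt; apply/negP => lt.
- by move: (before_t _ lt); rewrite cap_T.
- by move: (before_T _ lt); rewrite cap_t.
Qed.

Lemma payoff_never eps (m : 'I_N) (p : 'I_N -> strat V N) s0 :
  (forall t, ~~ capture (st p s0 t)) ->
  payoff gamma eps m p s0 = 0.
Proof.
move=> never; rewrite /payoff; case: capt_timeP => [_ | t cap_t _]; first reflexivity.
by case: (negP (never t) cap_t).
Qed.

Lemma reward_robber eps (m : 'I_N) (s : state V N) : is_robber m -> reward eps m s = -1.
Proof. by rewrite /reward => ->. Qed.

Lemma inv_INR_bounds (K : nat) : (0 < K)%N -> 0 <= 1 / INR K <= 1.
Proof.
move=> /leP K_pos; have := le_INR 1 K K_pos; rewrite /= => K_ge1.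
split; first by apply: Rlt_le; apply: Rdiv_lt_0_compat; lra.
by rewrite /Rdiv Rmult_1_l -Rinv_1; apply: Rinv_le_contravar; lra.
Qed.

Lemma reward_cop_bounds (m : 'I_N) (s : state V N) : is_cop m -> 0 <= reward R0 m s <= 1.
Proof.
rewrite /reward /is_robber /is_cop => cop_m; rewrite ifN_eq; last by rewrite ltn_eqF.
case: ifP => _; first by apply: inv_INR_bounds; lia.
case: ifP => on_m; last by rewrite /Rdiv Rmult_0_l; lra.
rewrite /Rminus Ropp_0 Rplus_0_r; apply: inv_INR_bounds.
by apply/card_gt0P; exists m; rewrite inE cop_m on_m.
Qed.

Lemma reward_sole_captor (c m : 'I_N) (s : state V N) : (2 < N)%N -> is_cop m ->
  [set i | is_cop i && on_robber s i] = [set c] ->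
  reward R0 m s = if m == c then 1 else 0.
Proof.
move=> N_gt2 cop_m captors; rewrite /reward /is_robber ifN_eq; last by rewrite ltn_eqF.
rewrite captors cards1 ifN_eq; last by apply/eqP; lia.
have -> : on_robber s m = (m == c) by move/setP: captors => /(_ m); rewrite !inE cop_m.
case: (m == c); last by rewrite /Rdiv Rmult_0_l.
by rewrite /Rminus Ropp_0 Rplus_0_r /Rdiv /= Rinv_1 Rmult_1_l.
Qed.

Lemma payoff_robber_nonpos eps (m : 'I_N) (p : 'I_N -> strat V N) s0 :
  is_robber m -> payoff gamma eps m p s0 <= 0.
Proof.
move=> rob_m; rewrite /payoff; case: capt_time => [t|]; last lra.
by rewrite reward_robber //; have := pow_lt gamma t (proj1 gamma01); lra.
Qed.

Lemma payoff_cop_nonneg (m : 'I_N) (p : 'I_N -> strat V N) s0 :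
  is_cop m -> 0 <= payoff gamma R0 m p s0.
Proof.
move=> cop_m; rewrite /payoff; case: capt_time => [t|]; last lra.
have := reward_cop_bounds (st p s0 t) cop_m; have := pow_lt gamma t (proj1 gamma01); nra.
Qed.

Lemma payoff_cop_late (m : 'I_N) (p : 'I_N -> strat V N) s0 T : is_cop m ->
  (forall u, (u < T)%N -> ~~ capture (st p s0 u)) -> payoff gamma R0 m p s0 <= gamma ^ T.
Proof.
move=> cop_m before_T; have := pow_lt gamma T (proj1 gamma01).
rewrite /payoff; case: capt_timeP => [_|t cap_t _]; first lra.
have le_Tt : (T <= t)%N by rewrite leqNgt; apply/negP => /before_T; rewrite cap_t.
have := pow_le_decr (ltac:(lra) : 0 <= gamma <= 1) le_Tt.
have := reward_cop_bounds (st p s0 t) cop_m; have := pow_lt gamma t (proj1 gamma01); nra.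
Qed.

Lemma payoff_robber_late eps (m : 'I_N) (p : 'I_N -> strat V N) s0 T : is_robber m ->
  (forall u, (u < T)%N -> ~~ capture (st p s0 u)) -> - gamma ^ T <= payoff gamma eps m p s0.
Proof.
move=> rob_m before_T; have := pow_lt gamma T (proj1 gamma01).
rewrite /payoff; case: capt_timeP => [_|t cap_t _]; first lra.
have le_Tt : (T <= t)%N by rewrite leqNgt; apply/negP => /before_T; rewrite cap_t.
by rewrite reward_robber //; have := pow_le_decr (ltac:(lra) : 0 <= gamma <= 1) le_Tt; lra.
Qed.

End Payoff.

Section GreedyProfile.

Variables (V : finType) (e : rel V) (N : nat) (r : 'I_N).
Hypothesis robber_r : nat_of_ord r = N.-1.

Lemma ltn_robberE (i : 'I_N) : (i < N.-1)%N = (i != r).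
Proof. by rewrite -robber_r -(inj_eq val_inj) /=; have := ltn_ord i; lia. Qed.

Lemma is_robberE (i : 'I_N) : is_robber i = (i == r).
Proof. by rewrite /is_robber -robber_r. Qed.

Lemma is_copE (i : 'I_N) : is_cop i = (i != r).
Proof. exact: ltn_robberE. Qed.

Lemma on_robberE (s : state V N) (i : 'I_N) : on_robber s i = (s.1 i == s.1 r).
Proof.
apply/existsP/idP => [[j /andP[]] | on_i]; last by exists r; rewrite is_robberE eqxx.
by rewrite is_robberE => /eqP ->.
Qed.

Lemma captureE (s : state V N) : capture s = [exists i, (i != r) && (s.1 i == s.1 r)].
Proof. by apply: eq_existsb => i; rewrite is_copE on_robberE. Qed.

Lemma step_pos (s : state V N) (v : V) (i : 'I_N) :
  (step s v).1 i = if i == s.2 then v else s.1 i.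
Proof. by rewrite ffunE. Qed.

Lemma step_turn_cop (s : state V N) (v : V) : s.2 != r -> nat_of_ord (step s v).2 = (s.2).+1.
Proof. by rewrite -ltn_robberE /= => lt; rewrite modn_small //; lia. Qed.

Lemma step_turn_robber (s : state V N) (v : V) : s.2 = r -> nat_of_ord (step s v).2 = 0%N.
Proof. by move=> /= ->; rewrite robber_r prednK ?modnn //; have := ltn_ord r; lia. Qed.

Lemma st_succ (p : 'I_N -> strat V N) s0 t :
  st p s0 t.+1 = step (st p s0 t) (p (st p s0 t).2 (run p s0 t).1 (st p s0 t)).
Proof. by []. Qed.

Lemma cnbr_refl (x : V) : cnbr e x x.
Proof. by rewrite /cnbr eqxx. Qed.

Definition legal_profile (p : 'I_N -> strat V N) : Prop := forall n, legal e n (p n).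

Lemma legal_upd (p : 'I_N -> strat V N) (m : 'I_N) (f : strat V N) :
  legal_profile p -> legal e m f -> legal_profile (upd p m f).
Proof. by move=> p_legal f_legal n; rewrite /upd; case: eqP => [-> |]. Qed.

Definition capture_if_adjacent : pstrat V N :=
  fun s => if cnbr e (s.1 s.2) (s.1 r) then s.1 r else s.1 s.2.

Definition escape_vertex (s : state V N) (v : V) : bool :=
  cnbr e (s.1 s.2) v && [forall i, (i != r) ==> ~~ cnbr e (s.1 i) v].

Definition escape_strat : pstrat V N :=
  fun s => if [pick v | escape_vertex s v] is Some v then v else s.1 s.2.

Definition greedy_profile : 'I_N -> pstrat V N :=
  fun n => if n == r then escape_strat else capture_if_adjacent.

Definition greedy_play : 'I_N -> strat V N := fun n => Defs.lift (greedy_profile n).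

Lemma capture_if_adjacent_legal n : plegal e n capture_if_adjacent.
Proof.
rewrite /plegal /legal /Defs.lift /capture_if_adjacent => h s <- _.
by case: ifP => // _; apply: cnbr_refl.
Qed.

Lemma escape_strat_legal n : plegal e n escape_strat.
Proof.
rewrite /plegal /legal /Defs.lift /escape_strat => h s <- _.
by case: pickP => [v /andP[] // | _]; apply: cnbr_refl.
Qed.

Lemma greedy_play_legal : legal_profile greedy_play.
Proof.
move=> n; rewrite /greedy_play /greedy_profile.
by case: ifP => _; [apply: escape_strat_legal | apply: capture_if_adjacent_legal].
Qed.

Lemma escape_strat_spec (s : state V N) :
  (exists v, escape_vertex s v) -> escape_vertex s (escape_strat s).
Proof. by move=> [v esc_v]; rewrite /escape_strat; case: pickP => // /(_ v); rewrite esc_v. Qed.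

Definition safe_before (c : nat) (s : state V N) : bool :=
  ~~ capture s && [forall i : 'I_N, (s.2 <= i < c)%N ==> ~~ cnbr e (s.1 i) (s.1 r)].

Lemma safe_before_cop_step c (s : state V N) (v : V) :
  (c <= N.-1)%N -> (s.2 < c)%N -> safe_before c s ->
  cnbr e (s.1 s.2) v -> safe_before c (step s v).
Proof.
move=> c_le turn_lt /andP[nocap /forallP far] move_v.
have turn_r : s.2 != r by rewrite -ltn_robberE; lia.
have robE : (step s v).1 r = s.1 r by rewrite step_pos eq_sym (negbTE turn_r).
have far_mover : ~~ cnbr e (s.1 s.2) (s.1 r) by apply: (implyP (far s.2)); rewrite leqnn.
apply/andP; split.
- rewrite captureE robE; apply/existsPn => i; rewrite step_pos.
  case: (eqVneq i s.2) => [-> | i_turn].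
    by rewrite turn_r /=; apply: contra far_mover => /eqP <-.
  by move: nocap; rewrite captureE => /existsPn.
- apply/forallP => i; apply/implyP; rewrite step_turn_cop // robE step_pos => /andP[lt_i i_c].
  rewrite ifN_eq; first by apply: (implyP (far i)); rewrite i_c andbT ltnW.
  by apply/eqP => i_turn; move: lt_i; rewrite i_turn ltnn.
Qed.

Lemma safe_before_escape_step (s : state V N) (v : V) :
  s.2 = r -> escape_vertex s v -> safe_before N.-1 (step s v).
Proof.
move=> turn_r /andP[_ /forallP far].
have robE : (step s v).1 r = v by rewrite step_pos turn_r eqxx.
have far_cop i : i != r -> ~~ cnbr e ((step s v).1 i) ((step s v).1 r).
  by move=> i_r; rewrite robE step_pos turn_r (negbTE i_r) (implyP (far i)).
apply/andP; split.
- rewrite captureE; apply/existsPn => i; apply/nandP.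
  case: (boolP (i == r)) => i_r; [by left | right].
  by apply: contra (far_cop i i_r) => /eqP ->; apply: cnbr_refl.
- by apply/forallP => i; apply/implyP => /andP[_]; rewrite ltn_robberE; apply: far_cop.
Qed.

Lemma safe_or_adjacent_cop (s : state V N) : ~~ capture s ->
  safe_before N.-1 s \/
  exists2 c : 'I_N, [&& c != r, s.2 <= c & cnbr e (s.1 c) (s.1 r)]%N & safe_before c s.
Proof.
move=> nocap; pose ahead (k : 'I_N) := [&& k != r, s.2 <= k & cnbr e (s.1 k) (s.1 r)]%N.
case: (boolP [exists k, ahead k]) => [/existsP[k0 ahead_k0] | /existsPn none].
- right; case: (@arg_minnP _ k0 ahead (fun k => nat_of_ord k) ahead_k0) => c ahead_c min_c.
  exists c => //; apply/andP; split => //; apply/forallP => i; apply/implyP => /andP[le_i lt_i].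
  apply/negP => adj_i; have : (c <= i)%N; last by lia.
  apply: min_c; rewrite /ahead le_i adj_i andbT -ltn_robberE.
  by case/and3P: ahead_c; rewrite -ltn_robberE; lia.
- left; apply/andP; split => //; apply/forallP => i; apply/implyP => /andP[le_i lt_i].
  by have := none i; rewrite /ahead -ltn_robberE lt_i le_i.
Qed.

Lemma safe_before_run (p : 'I_N -> strat V N) (s0 : state V N) tb (c : nat) :
  legal_profile p -> (c <= N.-1)%N ->
  ((st p s0 tb).2 <= c)%N -> safe_before c (st p s0 tb) ->
  forall u, (u <= c - (st p s0 tb).2)%N ->
  [/\ safe_before c (st p s0 (tb + u)),
      nat_of_ord (st p s0 (tb + u)).2 = ((st p s0 tb).2 + u)%N &
      forall k : 'I_N, ((st p s0 tb).2 + u <= k)%N ->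
        (st p s0 (tb + u)).1 k = (st p s0 tb).1 k].
Proof.
move=> p_legal c_le le_c safe0.
elim=> [|u IH] u_le; first by rewrite !addn0.
have [safeX turnX posX] := IH (ltnW u_le).
have turn_lt : ((st p s0 (tb + u)).2 < c)%N by rewrite turnX; lia.
have turn_r : (st p s0 (tb + u)).2 != r by rewrite -ltn_robberE; lia.
have nocap : ~~ capture (st p s0 (tb + u)) by case/andP: safeX.
have move_ok := p_legal _ (run p s0 (tb + u)).1 _ erefl nocap.
rewrite addnS st_succ; split.
- exact: safe_before_cop_step.
- by rewrite step_turn_cop // turnX addnS.
- move=> k le_k; rewrite step_pos ifN_eq; first by apply: posX; lia.
  by apply/eqP => k_turn; move: le_k; rewrite k_turn turnX; lia.
Qed.

Lemma adjacent_mover_captures (c : 'I_N) (s : state V N) : c != r -> s.2 = c -> ~~ capture s ->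
  cnbr e (s.1 c) (s.1 r) ->
  [set i | is_cop i && on_robber (step s (capture_if_adjacent s)) i] = [set c].
Proof.
move=> c_r turn_c nocap adj.
have moveE : capture_if_adjacent s = s.1 r by rewrite /capture_if_adjacent turn_c adj.
apply/setP => i; rewrite !inE is_copE on_robberE moveE !step_pos turn_c (eq_sym r) (negbTE c_r).
case: (eqVneq i c) => [-> | i_c]; first by rewrite c_r eqxx.
by move: nocap; rewrite captureE => /existsPn /(_ i) /negbTE.
Qed.

Lemma first_adjacent_cop_captures (p : 'I_N -> strat V N) (s0 : state V N) tb (c : 'I_N) :
  legal_profile p -> (forall h s, p c h s = capture_if_adjacent s) ->
  [&& c != r, (st p s0 tb).2 <= c & cnbr e ((st p s0 tb).1 c) ((st p s0 tb).1 r)]%N ->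
  safe_before c (st p s0 tb) ->
  [set i | is_cop i && on_robber (st p s0 (tb + (c - (st p s0 tb).2).+1)) i] = [set c].
Proof.
move=> p_legal p_c /and3P[c_r le_c adj] safe0.
have c_le : (c <= N.-1)%N by apply: ltnW; rewrite ltn_robberE.
have [safeX turnX posX] := safe_before_run p_legal c_le le_c safe0 (leqnn _).
have turn_c : (st p s0 (tb + (c - (st p s0 tb).2))).2 = c.
  by apply: val_inj; rewrite /= turnX; lia.
rewrite addnS st_succ turn_c p_c; apply: adjacent_mover_captures => //.
- by case/andP: safeX.
- by rewrite !posX //; lia.
Qed.

Section Optimality.

Hypothesis N_gt2 : (2 < N)%N.
Hypothesis no_forced_capture : forall s : state V N,
  is_robber s.2 -> ~~ capture s -> state_cop_number_inf e s.

(* Otherwise the N-1 cops, each capturing as soon as it is adjacent to the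
   robber, would capture within one round, giving c(G|s) <= N-1. *)
Lemma escape_exists (s : state V N) : s.2 = r -> ~~ capture s -> exists v, escape_vertex s v.
Proof.
move=> turn_r nocap; apply: NNPP => no_escape.
have robber_turn : is_robber s.2 by rewrite turn_r is_robberE.
move: (no_forced_capture robber_turn nocap); rewrite /state_cop_number_inf; apply.
exists N.-1; split; first by apply/andP; split; lia.
exists [set~ r], (fun _ => Defs.lift capture_if_adjacent).
split; first by move=> i; rewrite in_setC1 is_copE.
split; first by rewrite cardsC1 card_ord.
split; first by move=> i _; apply: capture_if_adjacent_legal.
move=> tau tau_legal.
set p := fun i => if i \in [set~ r] then _ else tau i.
have p_legal : legal_profile p.
  move=> n; rewrite /p; case: ifP => _; first exact: capture_if_adjacent_legal.
  exact: tau_legal.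
have p_cop (c : 'I_N) : c != r -> forall h s', p c h s' = capture_if_adjacent s'.
  by move=> c_r h s'; rewrite /p in_setC1 c_r.
set v := tau r [::] s.
have s1E : st p s 1 = step s v by rewrite st_succ /= /p turn_r in_setC1 eqxx.
have move_v : cnbr e (s.1 s.2) v by rewrite turn_r; apply: tau_legal.
have [i /andP[i_r adj_i]] : exists i, (i != r) && cnbr e (s.1 i) v.
  apply/existsP; apply: contraT => /existsPn far; case: no_escape; exists v.
  rewrite /escape_vertex move_v; apply/forallP => i; apply/implyP => i_r.
  by apply: contraNN (far i) => adj_i; rewrite i_r adj_i.
case cap1 : (capture (st p s 1)); first by exists 1%N.
have pos1 : forall k, k != r -> (st p s 1).1 k = s.1 k.
  by move=> k k_r; rewrite s1E step_pos turn_r (negbTE k_r).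
have rob1 : (st p s 1).1 r = v by rewrite s1E step_pos turn_r eqxx.
have turn1 : nat_of_ord (st p s 1).2 = 0%N by rewrite s1E; apply: step_turn_robber.
case: (safe_or_adjacent_cop (negbT cap1)) => [/andP[_ /forallP far] | [c ahead_c safe_c]].
- move: (implyP (far i)); rewrite turn1 ltn_robberE i_r pos1 // rob1 adj_i.
  by move=> /(_ isT).
- have c_r : c != r by case/and3P: ahead_c.
  have captors := first_adjacent_cop_captures p_legal (p_cop c c_r) ahead_c safe_c.
  exists (1 + (c - (st p s 1).2).+1)%N; apply/existsP; exists c.
  by move/setP/(_ c): captors; rewrite !inE eqxx => ->.
Qed.

Lemma safe_forever (p : 'I_N -> strat V N) (s0 : state V N) :
  legal_profile p -> (forall h s, p r h s = escape_strat s) ->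
  safe_before N.-1 s0 -> forall t, safe_before N.-1 (st p s0 t).
Proof.
move=> p_legal p_r safe0; elim=> [// | t IH]; rewrite st_succ.
have nocap : ~~ capture (st p s0 t) by case/andP: IH.
case: (eqVneq (st p s0 t).2 r) => [turn_r | turn_r].
- rewrite turn_r p_r; apply: safe_before_escape_step => //.
  exact/escape_strat_spec/escape_exists.
- apply: safe_before_cop_step => //; first by rewrite ltn_robberE.
  exact: p_legal.
Qed.

Variable gamma : R.
Hypothesis gamma01 : 0 < gamma < 1.

Definition saddle_point (m : 'I_N) (p : 'I_N -> strat V N) (s0 : state V N) : Prop :=
  (forall f, legal e m f -> payoff gamma R0 m (upd p m f) s0 <= payoff gamma R0 m p s0) /\
  (forall q, legal_profile q -> payoff gamma R0 m p s0 <= payoff gamma R0 m (upd q m (p m)) s0).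

Lemma greedy_play_robber h s : greedy_play r h s = escape_strat s.
Proof. by rewrite /greedy_play /Defs.lift /greedy_profile eqxx. Qed.

Lemma greedy_play_cop (c : 'I_N) h s : c != r -> greedy_play c h s = capture_if_adjacent s.
Proof. by move=> c_r; rewrite /greedy_play /Defs.lift /greedy_profile (negbTE c_r). Qed.

(* The first cop [c] to move that is adjacent to the robber captures alone at
   time [T], whatever the others do; nobody can make the capture happen earlier. *)
Lemma greedy_saddle_adjacent (m c : 'I_N) (s0 : state V N) :
  [&& c != r, s0.2 <= c & cnbr e (s0.1 c) (s0.1 r)]%N -> safe_before c s0 ->
  saddle_point m greedy_play s0.
Proof.
move=> ahead_c safe_c; have /and3P[c_r le_c _] := ahead_c.
have c_le : (c <= N.-1)%N by apply: ltnW; rewrite ltn_robberE.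
set T := (c - s0.2).+1.
have late p : legal_profile p -> forall u, (u < T)%N -> ~~ capture (st p s0 u).
  move=> p_legal u lt_u.
  have [safe_u _ _] := safe_before_run (tb := 0) p_legal c_le le_c safe_c (u := u) lt_u.
  by case/andP: safe_u.
have captured p : legal_profile p -> (forall h s, p c h s = capture_if_adjacent s) ->
    forall mm : 'I_N, payoff gamma R0 mm p s0 =
      (if mm == r then -1 else if mm == c then 1 else 0) * gamma ^ T.
  move=> p_legal p_c mm.
  have captors : [set i | is_cop i && on_robber (st p s0 T) i] = [set c]
    := first_adjacent_cop_captures (tb := 0) p_legal p_c ahead_c safe_c.
  rewrite (payoff_capture_at _ _ _ _ (late p p_legal)); last first.
    by apply/existsP; exists c; move/setP/(_ c): captors; rewrite !inE eqxx => ->.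
  case: (eqVneq mm r) => [-> | mm_r]; first by rewrite reward_robber // is_robberE.
  by rewrite (reward_sole_captor N_gt2 _ captors) // is_copE.
have play_c h s : greedy_play c h s = capture_if_adjacent s by apply: greedy_play_cop.
rewrite /saddle_point (captured _ greedy_play_legal play_c); split.
- case: (eqVneq m c) => [-> | m_c] f f_legal;
    have p_legal := legal_upd greedy_play_legal f_legal.
    rewrite (negbTE c_r) Rmult_1_l.
    by apply: (payoff_cop_late gamma01 _ (late _ p_legal)); rewrite is_copE.
  rewrite (captured _ p_legal); first by rewrite (negbTE m_c); exact: Rle_refl.
  by move=> h s; rewrite /upd eq_sym (negbTE m_c) greedy_play_cop.
- move=> q q_legal; case: (eqVneq m r) => [-> | m_r].
    have p_legal := legal_upd q_legal (@greedy_play_legal r).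
    have r_robber : is_robber r by rewrite is_robberE.
    by have := payoff_robber_late gamma01 R0 r_robber (late _ p_legal); lra.
  case: (eqVneq m c) => [-> | m_c].
    rewrite (captured _ (legal_upd q_legal (@greedy_play_legal c))).
      by rewrite (negbTE c_r) eqxx; exact: Rle_refl.
    by move=> h s; rewrite /upd eqxx greedy_play_cop.
  rewrite Rmult_0_l.
  by apply: (payoff_cop_nonneg gamma01); rewrite is_copE.
Qed.

(* The robber always has an escape vertex, so the greedy robber is never caught. *)
Lemma greedy_saddle_safe (m : 'I_N) (s0 : state V N) :
  safe_before N.-1 s0 -> saddle_point m greedy_play s0.
Proof.
move=> safe0.
have no_capture p : legal_profile p -> (forall h s, p r h s = escape_strat s) ->
    forall mm : 'I_N, payoff gamma R0 mm p s0 = 0.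
  move=> p_legal p_r mm; apply: payoff_never => t.
  by case/andP: (safe_forever p_legal p_r safe0 t).
rewrite /saddle_point (no_capture _ greedy_play_legal greedy_play_robber); split.
- move=> f f_legal; case: (eqVneq m r) => [-> | m_r].
    by apply: (payoff_robber_nonpos gamma01); rewrite is_robberE.
  rewrite no_capture; first exact: Rle_refl.
    exact: legal_upd greedy_play_legal f_legal.
  by move=> h s; rewrite /upd eq_sym (negbTE m_r) greedy_play_robber.
- move=> q q_legal; case: (eqVneq m r) => [-> | m_r].
    rewrite no_capture; first exact: Rle_refl.
      exact: legal_upd q_legal (@greedy_play_legal r).
    by move=> h s; rewrite /upd eqxx greedy_play_robber.
  by apply: (payoff_cop_nonneg gamma01); rewrite is_copE.
Qed.

Lemma greedy_optimal (m : 'I_N) : optimal_pair e gamma R0 m greedy_profile.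
Proof.
split; first exact: greedy_play_legal.
move=> s0 nocap; case: (safe_or_adjacent_cop nocap) => [safe0 | [c ahead_c safe_c]].
- exact: greedy_saddle_safe.
- exact: greedy_saddle_adjacent ahead_c safe_c.
Qed.

End Optimality.

End GreedyProfile.

Local Close Scope R_scope.

Theorem mainTheorem10 (V : finType) (e : rel V) (N : nat) :
  simple_graph e -> connected_graph e -> 3 <= N -> in_calG2 e N ->
  forall s0 : state V N, ~~ capture s0 ->
  forall gamma : R, Rlt R0 gamma /\ Rlt gamma R1 ->
  exists phi : 'I_N -> 'I_N -> pstrat V N,
    trigger_choice e gamma R0 phi /\ positional_trigger e gamma R0 s0 phi.
Proof.
move=> _ _ N_gt2 [_ no_forced_capture] s0 _ gamma gamma01.
have robber_lt : N.-1 < N by lia.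
pose r := Ordinal robber_lt.
have optimal m :=
  greedy_optimal (erefl : nat_of_ord r = N.-1) N_gt2 no_forced_capture gamma01 m.
exists (fun _ => greedy_profile e r); split; first exact: optimal.
move=> n m; exists (greedy_profile e r n); split => //.
by exists r, (greedy_profile e r); split; [rewrite /is_robber | split; first exact: optimal].
Qed.
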